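(* Let $(\mathcal{R},\mu)$ be resonant, let $\|\cdot\|_X$ be an r.i. quasi-Banach function norm on $\mathcal{M}(\mathcal{R},\mu)$ with corresponding space $X$, and let $\|\cdot\|_{\overline{X}}$ be the r.i. quasi-Banach function norm on $\mathcal{M}([0,\infty),\lambda)$ constructed as in the context, with corresponding space $\overline{X}$. Assume that $L^1\cap L^\infty\hookrightarrow X$ (over $(\mathcal{R},\mu)$) and that there exists $f_0\in\overline{X}$ with $f_0^*(0)=\infty$. Then $L^1\cap L^\infty\subseteq X_a$.
   Context: Let $(\mathcal{R},\mu)$ be a $\sigma$-finite measure space; $\mathcal{M}$ denotes the $\mu$-measurable extended complex-valued functions (identified a.e.), $\mathcal{M}_+$ the non-negative ones. $f_*(s)=\mu(\{|f|>s\})$, $f^*(t)=\inf\{s\ge0;\,f_*(s)\le t\}$ (non-increasing rearrangement). $(\mathcal{R},\mu)$ is called resonant if it is either non-atomic or completely atomic with all atoms of equal measure. A quasi-Banach function norm is a map $\|\cdot\|:\mathcal{M}\to[0,\infty]$ with $\|f\|=\||f|\|$ such that on $\mathcal{M}_+$: (Q1) $\|af\|=|a|\|f\|$, $\|f\|=0\iff f=0$ a.e., and there is $C\ge1$ (modulus of concavity) with $\|f+g\|\le C(\|f\|+\|g\|)$; (P2) $f\le g$ a.e. implies $\|f\|\le\|g\|$; (P3) $f_n\uparrow f$ a.e. implies $\|f_n\|\uparrow\|f\|$; (P4) $\|\chi_E\|<\infty$ whenever $\mu(E)<\infty$. The norm is rearrangement-invariant (r.i.) if $\|f\|=\|g\|$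 whenever $f^*=g^*$. The corresponding space is $X=\{f\in\mathcal{M};\,\|f\|_X<\infty\}$. A function $f\in X$ has absolutely continuous quasinorm if $\|f\chi_{E_k}\|_X\to0$ for every sequence of measurable sets $E_k$ with $\chi_{E_k}\to0$ a.e.; $X_a$ denotes the set of such functions. $L^1\cap L^\infty$ is the space with norm $\|f\|_{L^1\cap L^\infty}=f^*(0)+\int_0^\infty f^*\,d\lambda$; $Y\hookrightarrow X$ means $Y\subseteq X$ with continuous inclusion. Construction of $\|\cdot\|_{\overline{X}}$: (i) If $(\mathcal{R},\mu)$ is non-atomic, fix a measure-preserving map $\sigma$ from $(\mathcal{R},\mu)$ onto $[0,\mu(\mathcal{R}))$ (with Lebesgue measure $\lambda$), and for $h\in\mathcal{M}([0,\mu(\mathcal{R})),\lambda)$ put $\|h\|_{\overline{X_0}}=\|h\circ\sigma\|_X$. (ii) If $(\mathcal{R},\mu)$ is completely atomic with all atoms of measure $\beta\in(0,\infty)$, fix an enumeration $(e_n)_{n\in\mathcal{N}}$ of the atoms, $\mathcal{N}=\{n\in\mathbb{N};\,\beta n<\mu(\mathcal{R})\}$ ($0\in\mathbb{N}$), define $T(h)(e_n)=\beta^{-1}\int_{\beta n}^{\beta(n+1)}h^*\,d\lambda$ for $n\in\mathcal{N}$, and put $\|h\|_{\overline{X_0}}=\|T(h)\|_X$. In both cases define, for $f\in\mathcal{M}([0,\infty),\lambda)$, $\|f\|_{\overline{X}}=\|f^*\chi_{[0,\mu(\mathcal{R}))}\|_{\overline{X_0}}$. (This is an r.i. quasi-Banach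 function norm with $\|f\|_X=\|f^*\|_{\overline{X}}$ for $f\in\mathcal{M}(\mathcal{R},\mu)$.) *)

From HB Require Import structures.
From mathcomp Require Import all_boot all_order all_algebra.
From mathcomp Require Import all_classical all_reals all_analysis.
From mathcomp Require Import measurable_realfun.
Set Implicit Arguments. Unset Strict Implicit. Unset Printing Implicit Defensive.
Import Order.TTheory GRing.Theory Num.Theory.
Import numFieldNormedType.Exports.
Local Open Scope classical_set_scope.
Local Open Scope ring_scope.
Local Open Scope ereal_scope.

Section Defs.
Context {R : realType}.

Definition distf d (T : measurableType d) (mu : set T -> \bar R) (D : set T)
  (f : T -> \bar R) (s : R) : \bar R :=
  mu (D `&` [set x | s%:E < `| f x |]).

Definition rearr d (T : measurableType d) (mu : set T -> \bar R) (D : set T)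
  (f : T -> \bar R) (t : R) : \bar R :=
  ereal_inf [set s%:E | s in [set s : R | (0 <= s)%R /\ distf mu D f s <= t%:E]].

Definition Rplus : set R := [set x : R | (0 <= x)%R].
Definition rearrL (f : R -> \bar R) (t : R) : \bar R :=
  rearr (@lebesgue_measure R) Rplus f t.

Definition Mplus d (T : measurableType d) (f : T -> \bar R) : Prop :=
  measurable_fun setT f /\ forall x, 0 <= f x.

(* quasi-Banach function norm, given by its values on M_+ *)
Definition qBFN d (T : measurableType d) (mu : {measure set T -> \bar R})
  (N : (T -> \bar R) -> \bar R) : Prop :=
  (forall f, Mplus f -> 0 <= N f) /\
  (forall (a : R) f, Mplus f -> (0 <= a)%R -> N (fun x => a%:E * f x) = a%:E * N f) /\
  (forall f, Mplus f -> (N f = 0 <-> {ae mu, forall x, f x = 0})) /\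
  (exists C : R, (1 <= C)%R /\
     forall f g, Mplus f -> Mplus g -> N (f \+ g) <= C%:E * (N f + N g)) /\
  (forall f g, Mplus f -> Mplus g -> {ae mu, forall x, f x <= g x} -> N f <= N g) /\
  (forall (F : nat -> T -> \bar R) f, (forall n, Mplus (F n)) -> Mplus f ->
     {ae mu, forall x, {homo (fun n => F n x) : n m / (n <= m)%N >-> n <= m}
                       /\ (fun n => F n x) @ \oo --> f x} ->
     (fun n => N (F n)) @ \oo --> N f) /\
  (forall E, measurable E -> mu E < +oo -> N (fun x => (\1_E x)%:E) < +oo).

Definition ri d (T : measurableType d) (mu : {measure set T -> \bar R})
  (N : (T -> \bar R) -> \bar R) : Prop :=
  forall f g, Mplus f -> Mplus g ->
    (forall t : R, (0 <= t)%R -> rearr mu setT f t = rearr mu setT g t) ->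
    N f = N g.

Definition atom d (T : measurableType d) (mu : {measure set T -> \bar R})
  (A : set T) : Prop :=
  measurable A /\ 0 < mu A /\
  forall B, measurable B -> B `<=` A -> mu B = 0 \/ mu (A `\` B) = 0.

Definition nonatomic d (T : measurableType d) (mu : {measure set T -> \bar R}) :=
  forall A, ~ atom mu A.

Definition Imu d (T : measurableType d) (mu : {measure set T -> \bar R}) : set R :=
  [set t : R | (0 <= t)%R /\ t%:E < mu setT].

Definition meas_pres d (T : measurableType d) (mu : {measure set T -> \bar R})
  (sigma : T -> R) : Prop :=
  measurable_fun setT sigma /\ (forall x, Imu mu (sigma x)) /\
  forall A : set R, measurable A -> A `<=` Imu mu ->
    mu (sigma @^-1` A) = (@lebesgue_measure R) A.

Definition Nidx d (T : measurableType d) (mu : {measure set T -> \bar R})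
  (beta : R) (n : nat) : bool := (beta * n%:R)%:E < mu setT.

Definition atomic_enum d (T : measurableType d) (mu : {measure set T -> \bar R})
  (beta : R) (e : nat -> set T) : Prop :=
  (0 < beta)%R /\
  (forall n, Nidx mu beta n -> atom mu (e n) /\ mu (e n) = beta%:E) /\
  (forall n m, Nidx mu beta n -> Nidx mu beta m -> n <> m -> e n `&` e m = set0) /\
  mu (~` \bigcup_(n in [set n | Nidx mu beta n]) e n) = 0.

Definition cutrearr d (T : measurableType d) (mu : {measure set T -> \bar R})
  (f : R -> \bar R) : R -> \bar R :=
  fun t => rearrL f t * (\1_(Imu mu) t)%:E.

Definition Xbar_nonatomic d (T : measurableType d) (mu : {measure set T -> \bar R})
  (N : (T -> \bar R) -> \bar R) (sigma : T -> R) : (R -> \bar R) -> \bar R :=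
  fun f => N (fun x => cutrearr mu f (sigma x)).

Definition Top d (T : measurableType d) (mu : {measure set T -> \bar R})
  (beta : R) (e : nat -> set T) (h : R -> \bar R) : T -> \bar R :=
  fun x => \sum_(0 <= n <oo | Nidx mu beta n)
     ((\1_(e n) x)%:E * ((beta^-1)%:E *
       \int[@lebesgue_measure R]_(t in `[(beta * n%:R)%R, (beta * n.+1%:R)%R]%classic)
          rearrL h t)).

Definition Xbar_atomic d (T : measurableType d) (mu : {measure set T -> \bar R})
  (N : (T -> \bar R) -> \bar R) (beta : R) (e : nat -> set T) :
  (R -> \bar R) -> \bar R :=
  fun f => N (Top mu beta e (cutrearr mu f)).

Definition L1Linf d (T : measurableType d) (mu : {measure set T -> \bar R})
  (f : T -> \bar R) : \bar R :=
  rearr mu setT f 0 + \int[@lebesgue_measure R]_(t in Rplus) rearr mu setT f t.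

End Defs.

(* Split f at a small level eps.  The low part f 1_{f <= eps} has small
   L^1 cap L^oo norm (dominated convergence for min(eps, f^* )), hence small
   X-norm by the embedding.  The high part lives on {f > eps}, a set of finite
   measure, and is essentially bounded by some M since f^*(0) < oo; on E_k it
   is thus at most M 1_{E_k cap {f > eps}}, and mu(E_k cap {f > eps}) -> 0.
   It remains to see that ||1_B||_X -> 0 as mu(B) -> 0.  If all atoms have
   measure beta, sets of measure below beta are null.  In the non-atomic case
   f0^* >= K on some [0, delta); by rearrangement invariance 1_B may be
   replaced by 1_A with A = sigma^-1 [0, mu B), and K 1_A <= f0^* o sigma
   gives ||1_B||_X <= ||f0||_Xbar / K. *)

From HB Require Import structures.
From mathcomp Require Import all_boot all_order all_algebra.
From mathcomp Require Import all_classical all_reals all_analysis.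
From mathcomp Require Import measurable_realfun.
From mathcomp Require Import ring lra.
Set Implicit Arguments.
Unset Strict Implicit.
Unset Printing Implicit Defensive.
Import Order.TTheory GRing.Theory Num.Theory.
Import numFieldNormedType.Exports.
Local Open Scope classical_set_scope.
Local Open Scope ring_scope.
Local Open Scope ereal_scope.

Lemma nneg_cvge0 {R : realType} (u : nat -> \bar R) : (forall n, 0 <= u n) ->
  (forall eta : R, (0 < eta)%R -> \forall n \near \oo, u n <= eta%:E) ->
  u @ \oo --> 0.
Proof.
move=> u0 u_small; apply/(@fine_cvgP _ _ _ _ u 0%R); split.
  near=> n; have un : u n <= 1%:E by near: n; exact: u_small.
  by rewrite ge0_fin_numE // (le_lt_trans un) ?ltry.
apply/cvgrPdist_le => eta eta0; near=> n.
have un : u n <= eta%:E by near: n; exact: u_small.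
have unf : u n \is a fin_num by rewrite ge0_fin_numE // (le_lt_trans un) ?ltry.
by rewrite /= sub0r normrN ger0_norm ?fine_ge0 // -lee_fin fineK.
Unshelve. all: by end_near.
Qed.

Lemma cvge0_lt {R : realType} (u : nat -> \bar R) : u @ \oo --> 0 ->
  forall e : R, (0 < e)%R -> \forall n \near \oo, u n < e%:E.
Proof.
move/(@fine_cvgP _ _ _ _ u 0%R) => [ufin ucvg] e e0; near=> n.
have : (`|0 - fine (u n)| < e)%R by near: n; apply: cvgr_dist_lt.
have ufn : u n \is a fin_num by near: n.
rewrite sub0r normrN -(fineK ufn) lte_fin; apply: le_lt_trans; exact: ler_norm.
Unshelve. all: by end_near.
Qed.

Lemma nonincreasing_emeasurable {R : realType} (phi : R -> \bar R) :
  {homo phi : a b / (a <= b)%R >-> b <= a} -> measurable_fun setT phi.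
Proof.
move=> phi_dec; apply: (measurability _ (ErealGenOInfty.measurableE R)).
move=> /= _ [_ [a ->]] <-; apply: measurableI => //.
apply: is_interval_measurable => s t /=.
rewrite !in_itv/= !andbT => fs ft u /andP[su ut].
by rewrite in_itv/= andbT (lt_le_trans ft)// phi_dec.
Qed.

Lemma RplusE {R : realType} : (Rplus : set R) = `[0%R, +oo[%classic.
Proof. by apply/seteqP; split => x; rewrite /Rplus /= in_itv andbT. Qed.

Lemma measurable_Rplus {R : realType} : measurable (Rplus : set R).
Proof. by rewrite RplusE. Qed.

Lemma lebesgue_measure_Rplus {R : realType} :
  (@lebesgue_measure R) Rplus = +oo.
Proof. by rewrite RplusE lebesgue_measure_itv /= ltry. Qed.

Lemma integral_min_cvg0 {R : realType} (phi : R -> \bar R) :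
  measurable_fun setT phi -> (forall t, 0 <= phi t) ->
  \int[@lebesgue_measure R]_(t in Rplus) phi t < +oo ->
  (fun n => \int[@lebesgue_measure R]_(t in Rplus) mine (n.+1%:R^-1)%:E (phi t))
    @ \oo --> 0.
Proof.
move=> mphi phi0 intfin.
have min_ge0 n t : 0 <= mine (n.+1%:R^-1)%:E (phi t).
  by rewrite le_min phi0 lee_fin invr_ge0 ler0n.
have mmin n : measurable_fun Rplus (fun t => mine (n.+1%:R^-1)%:E (phi t)).
  by apply: measurable_mine; [exact: measurable_cst|exact: measurable_funTS].
have min_cvg0 : {ae @lebesgue_measure R, forall t, Rplus t ->
    (fun n => mine (n.+1%:R^-1)%:E (phi t)) @ \oo --> cst 0 t}.
  apply: aeW => t _; apply: nneg_cvge0 => // eta eta0; near=> n.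
  rewrite ge_min lee_fin; apply/orP; left; apply: ltW.
  by near: n; exact: (near_infty_natSinv_lt (PosNum eta0)).
have int_phi : (@lebesgue_measure R).-integrable Rplus phi.
  apply/integrableP; split; first exact: measurable_funTS.
  by under eq_integral do rewrite gee0_abs //.
have min_le_phi : {ae @lebesgue_measure R, forall t n, Rplus t ->
    `|mine (n.+1%:R^-1)%:E (phi t)| <= phi t}.
  by apply: aeW => t n _; rewrite gee0_abs // ge_min lexx orbT.
have [_ _] := @dominated_convergence _ _ R (@lebesgue_measure R) Rplus
  measurable_Rplus _ (cst 0) phi mmin (measurable_cst _) min_cvg0 int_phi min_le_phi.
by rewrite integral0.
Unshelve. all: by end_near.
Qed.

Section rearrangement.
Context {R : realType} {d} {T : measurableType d} (mu : {measure set T -> \bar R}).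
Implicit Types (D : set T) (f g : T -> \bar R).

Lemma rearr_ge0 D f t : 0 <= rearr mu D f t.
Proof. by apply: le_ereal_inf_tmp => _ [s [s0 _] <-]; rewrite lee_fin. Qed.

Lemma rearr_le_antitone D f : {homo rearr mu D f : t1 t2 / (t1 <= t2)%R >-> t2 <= t1}.
Proof.
move=> t1 t2 t12; apply: ereal_inf_le_tmp => _ [s [s0 ds] <-]; exists s => //.
by split => //; apply: le_trans ds _; rewrite lee_fin.
Qed.

Lemma measurable_rearr D f : measurable_fun setT (rearr mu D f).
Proof. exact: nonincreasing_emeasurable (@rearr_le_antitone D f). Qed.

Lemma rearr_le D f (s t : R) : (0 <= s)%R -> distf mu D f s <= t%:E ->
  rearr mu D f t <= s%:E.
Proof. by move=> s0 h; apply: ereal_inf_lbound; exists s. Qed.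

Lemma rearr_ltP D f (t : R) x : rearr mu D f t < x ->
  exists s : R, [/\ (0 <= s)%R, distf mu D f s <= t%:E & s%:E < x].
Proof. by move=> /ereal_inf_lt[_ [s [s0 ds] <-] sx]; exists s. Qed.

Lemma measurable_distf_set D f (s : R) : measurable D -> measurable_fun D f ->
  measurable (D `&` [set x | s%:E < `|f x|]).
Proof.
move=> mD mf; apply: emeasurable_fun_o_infty => //.
exact: measurableT_comp (@abse_measurable R setT) mf.
Qed.

Lemma distf_le_antitone D f (s1 s2 : R) : measurable D -> measurable_fun D f ->
  (s1 <= s2)%R -> distf mu D f s2 <= distf mu D f s1.
Proof.
move=> mD mf s12; apply: le_measure; rewrite ?inE; try exact: measurable_distf_set.
by move=> x [Dx /= h]; split => //; apply: le_lt_trans h; rewrite lee_fin.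
Qed.

Lemma distf_indic (B : set T) (s : R) :
  distf mu setT (fun x => (\1_B x)%:E) s =
  if (s < 0)%R then mu setT else if (s < 1)%R then mu B else 0.
Proof.
rewrite /distf setTI; have absE x : `|(\1_B x)%:E| = (\1_B x)%:E :> \bar R.
  by rewrite gee0_abs ?lee_fin.
under eq_set do rewrite absE lte_fin /indic.
case: ifPn => s0.
  by congr (mu _); apply/seteqP; split => x //= _; case: (x \in B) => /=; lra.
rewrite -leNgt in s0; case: ifPn => s1.
  congr (mu _); apply/seteqP; split => x /=; last by move=> Bx; rewrite mem_set.
  by case: (boolP (x \in B)) => [/set_mem|] //= _; lra.
rewrite -leNgt in s1; rewrite (_ : [set _ | _] = set0) ?measure0//.
by apply/seteqP; split => x //=; case: (x \in B) => /=; lra.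
Qed.

End rearrangement.

Section nonnegative_functions.
Context {R : realType} {d} {T : measurableType d} (mu : {measure set T -> \bar R}).
Implicit Types (f g : T -> \bar R) (B : set T).

Lemma Mplus_indic B : measurable B -> Mplus (fun x => (\1_B x)%:E : \bar R).
Proof.
move=> mB; split; last by move=> x; rewrite lee_fin.
by apply/measurable_EFinP; exact: measurable_indic.
Qed.

Lemma Mplus_mul_indic f B : Mplus f -> measurable B ->
  Mplus (fun x => f x * (\1_B x)%:E).
Proof.
move=> [mf f0] mB; split; last by move=> x; apply: mule_ge0 => //; rewrite lee_fin.
by apply: emeasurable_funM => //; apply/measurable_EFinP; exact: measurable_indic.
Qed.

Lemma Mplus_cst (a : R) : (0 <= a)%R -> Mplus (fun _ : T => a%:E).
Proof. by move=> a0; split => [|_]; [exact: measurable_cst|rewrite lee_fin]. Qed.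

Lemma Mplus_add f g : Mplus f -> Mplus g -> Mplus (f \+ g).
Proof.
move=> [mf f0] [mg g0]; split; first exact: emeasurable_funD.
by move=> x; exact: adde_ge0.
Qed.

Lemma measurable_level_set f (s : R) : measurable_fun setT f ->
  measurable [set x | s%:E < f x].
Proof. by move=> mf; rewrite -(setTI [set _ | _]); exact: emeasurable_fun_o_infty. Qed.

Lemma distf_nneg f (s : R) : (forall x, 0 <= f x) ->
  distf mu setT f s = mu [set x | s%:E < f x].
Proof.
move=> f0; rewrite /distf setTI; congr (mu _).
by apply/seteqP; split => x /=; rewrite gee0_abs.
Qed.

Lemma L1Linf_lty f : L1Linf mu f < +oo ->
  rearr mu setT f 0 < +oo /\
  \int[@lebesgue_measure R]_(t in Rplus) rearr mu setT f t < +oo.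
Proof.
have int0 : 0 <= \int[@lebesgue_measure R]_(t in Rplus) rearr mu setT f t.
  by apply: integral_ge0 => t _; exact: rearr_ge0.
move=> Lf; split; apply: le_lt_trans Lf; rewrite /L1Linf.
- exact: leeDl.
- by apply: leeDr; exact: rearr_ge0.
Qed.

Lemma rearr0_ess_bound f : Mplus f -> rearr mu setT f 0 < +oo ->
  exists M : R, (0 <= M)%R /\ mu.-negligible [set x | M%:E < f x].
Proof.
move=> [mf f0] /rearr_ltP [M [M0 distM _]]; exists M; split => //.
exists (setT `&` [set x | M%:E < `|f x|]); split.
- exact: measurable_distf_set.
- by apply/eqP; rewrite -measure_le0.
- by move=> x /= h; split => //; rewrite gee0_abs.
Qed.

(* Otherwise f^* >= eps on the whole half-line, contradicting integrability. *)
Lemma measure_level_set_lty f (eps : R) : Mplus f -> (0 < eps)%R ->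
  \int[@lebesgue_measure R]_(t in Rplus) rearr mu setT f t < +oo ->
  mu [set x | eps%:E < f x] < +oo.
Proof.
move=> [mf f0] eps0 intfin; rewrite ltNge leye_eq; apply/negP => /eqP level_inf.
have rearr_ge t : (0 <= t)%R -> eps%:E <= rearr mu setT f t.
  move=> t0; apply: le_ereal_inf_tmp => _ [s [s0 ds] <-].
  rewrite lee_fin leNgt; apply/negP => s_eps.
  have := distf_le_antitone mu measurableT mf (ltW s_eps).
  rewrite distf_nneg // level_inf leye_eq => /eqP distf_inf.
  by rewrite distf_inf leye_eq in ds.
have : \int[@lebesgue_measure R]_(t in Rplus) (cst eps%:E) t <=
       \int[@lebesgue_measure R]_(t in Rplus) rearr mu setT f t.
  apply: ge0_le_integral => //.
  - exact: measurable_Rplus.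
  - by move=> t _ /=; rewrite lee_fin ltW.
  - by apply: measurable_funTS; exact: measurable_rearr.
rewrite integral_cst; last exact: measurable_Rplus.
set L := (X in _ * X <= _); have -> : L = +oo := lebesgue_measure_Rplus.
by rewrite mulry gtr0_sg ?mul1e // leye_eq => /eqP intinf; rewrite intinf ltxx in intfin.
Qed.

Definition low_part f (eps : R) : T -> \bar R :=
  fun x => f x * (\1_(~` [set y | (eps%:E < f y)%E]) x)%:E.

Lemma Mplus_low_part f (eps : R) : Mplus f -> Mplus (low_part f eps).
Proof.
by move=> Mf; apply: Mplus_mul_indic => //; exact/measurableC/measurable_level_set/Mf.1.
Qed.

Lemma mul_indic_le_high_low f (E : set T) (eps : R) : Mplus f -> forall x,
  f x * (\1_E x)%:E <=
  f x * (\1_(E `&` [set y | (eps%:E < f y)%E]) x)%:E + low_part f eps x.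
Proof.
move=> [_ f0] x; rewrite /low_part !indicE in_setI in_setC.
by case: (x \in E); case: (x \in _) => /=; rewrite ?mule1 ?mule0 ?adde0 ?add0e.
Qed.

Lemma rearr_low_part_le f (eps t : R) : Mplus f -> (0 <= eps)%R -> (0 <= t)%R ->
  rearr mu setT (low_part f eps) t <= mine eps%:E (rearr mu setT f t).
Proof.
move=> Mf eps0 t0; have [mf f0] := Mf; set h := low_part f eps.
have [hf heps] : (forall x, `|h x| <= `|f x|) /\ (forall x, `|h x| <= eps%:E).
  split => x; rewrite /h /low_part indicE in_setC; case: (boolP (x \in _)) => /= xF.
  - by rewrite mule0 abse0 abse_ge0.
  - by rewrite mule1.
  - by rewrite mule0 abse0 lee_fin.
  - by rewrite mule1 gee0_abs // leNgt; apply: contra xF => fx; exact: mem_set.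
have mh : measurable_fun setT h by exact: (Mplus_low_part eps Mf).1.
rewrite le_min; apply/andP; split.
  apply: rearr_le => //; rewrite /distf (_ : _ `&` _ = set0) ?measure0 ?lee_fin //.
  by apply/seteqP; split => x // [_ /= /lt_le_trans /(_ (heps x))]; rewrite ltxx.
apply: ereal_inf_le_tmp => _ [s [s0 ds] <-]; exists s => //; split => //.
apply: le_trans ds; apply: le_measure; rewrite ?inE; try exact: measurable_distf_set.
by move=> x [_ /= hx]; split => //; exact: lt_le_trans hx (hf x).
Qed.

Lemma L1Linf_low_part_small f : Mplus f -> L1Linf mu f < +oo ->
  forall e : R, (0 < e)%R -> exists2 eps : R, (0 < eps)%R &
    L1Linf mu (low_part f eps) <= e%:E.
Proof.
move=> Mf /L1Linf_lty[_ intfin] e e0.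
have e20 : (0 < e / 2)%R by rewrite divr_gt0.
have : \forall n \near \oo, (n.+1%:R^-1 < e / 2)%R /\
    \int[@lebesgue_measure R]_(t in Rplus) mine (n.+1%:R^-1)%:E (rearr mu setT f t)
      < (e / 2)%:E.
  near=> n; split; near: n; first exact: (near_infty_natSinv_lt (PosNum e20)).
  apply: cvge0_lt => //; apply: integral_min_cvg0 => //.
  - exact: measurable_rearr.
  - by move=> t; exact: rearr_ge0.
move=> /filter_ex[n [n_small int_small]].
have eps0 : (0 < n.+1%:R^-1 :> R)%R by rewrite invr_gt0.
exists (n.+1%:R^-1)%R => //; rewrite /L1Linf (splitr e) EFinD; apply: leeD.
  apply: le_trans (rearr_low_part_le Mf (ltW eps0) (lexx _)) _.
  by rewrite ge_min lee_fin (ltW n_small).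
apply: le_trans (ltW int_small); apply: ge0_le_integral => //.
- exact: measurable_Rplus.
- by move=> t _; exact: rearr_ge0.
- by apply: measurable_funTS; exact: measurable_rearr.
- apply: measurable_mine; first exact: measurable_cst.
  by apply: measurable_funTS; exact: measurable_rearr.
- by move=> t t0; exact: rearr_low_part_le.
Unshelve. all: by end_near.
Qed.

Lemma measure_setI_cvg0 (E : nat -> set T) (F : set T) :
  (forall k, measurable (E k)) -> measurable F -> mu F < +oo ->
  {ae mu, forall x, (fun k => \1_(E k) x : R) @ \oo --> 0%R} ->
  (fun k => mu (E k `&` F)) @ \oo --> 0.
Proof.
move=> mE mF Ffin E0.
have mEF k : measurable_fun setT (fun x => (\1_(E k `&` F) x)%:E : \bar R).
  by apply/measurable_EFinP; apply: measurable_indic; exact: measurableI.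
have EF0 : {ae mu, forall x, setT x ->
    (fun k => ((\1_(E k `&` F) x)%:E : \bar R)) @ \oo --> cst 0 x}.
  apply: filterS E0 => x /cvgrPdist_lt /(_ 1%R ltr01) Ex_small _.
  apply: nneg_cvge0 => [k|e e0]; first by rewrite lee_fin.
  apply: filterS Ex_small => k; rewrite !indicE in_setI.
  case: (x \in E k) => /=; first by rewrite sub0r normrN normr1 ltxx.
  by rewrite lee_fin ltW.
have int_F : mu.-integrable setT (fun x => ((\1_F x)%:E : \bar R)).
  apply/integrableP; split; first by apply/measurable_EFinP; exact: measurable_indic.
  under eq_integral do rewrite gee0_abs ?lee_fin//.
  by rewrite integral_indic // setIT.
have EF_le_F : {ae mu, forall x k, setT x ->
    `|(\1_(E k `&` F) x)%:E| <= ((\1_F x)%:E : \bar R)}.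
  apply: aeW => x k _; rewrite gee0_abs ?lee_fin// !indicE in_setI.
  by case: (x \in E k); case: (x \in F).
have [_ _] := @dominated_convergence _ _ R mu setT measurableT _ (cst 0) _ mEF
  (measurable_cst _) EF0 int_F EF_le_F.
rewrite integral0; apply: cvg_trans; apply: near_eq_cvg; apply: nearW => k.
by rewrite /= integral_indic ?setIT //; exact: measurableI.
Qed.

End nonnegative_functions.

Definition fundamental_vanishes {R : realType} d (T : measurableType d)
    (mu : {measure set T -> \bar R}) (N : (T -> \bar R) -> \bar R) : Prop :=
  forall eta : R, (0 < eta)%R -> exists2 delta : R, (0 < delta)%R &
    forall B, measurable B -> mu B < delta%:E -> N (fun x => (\1_B x)%:E) <= eta%:E.

Section absolute_continuity.
Context {R : realType} {d} {T : measurableType d} (mu : {measure set T -> \bar R}).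
Variable N : (T -> \bar R) -> \bar R.
Hypothesis NqB : qBFN mu N.

Lemma qBFN_ess_bounded_mul_indic f (B : set T) (M : R) :
  Mplus f -> measurable B -> (0 <= M)%R -> mu.-negligible [set x | M%:E < f x] ->
  N (fun x => f x * (\1_B x)%:E) <= M%:E * N (fun x => (\1_B x)%:E).
Proof.
case: NqB => _ [Nscale [_ [_ [Nmono _]]]] Mf mB M0 [Z [mZ Z0 fZ]].
rewrite -Nscale //; last exact: Mplus_indic.
apply: Nmono; [exact: Mplus_mul_indic|exact/Mplus_mul_indic/mB/Mplus_cst|].
exists Z; split => // x /= fxB; apply: fZ => /=; rewrite ltNge; apply/negP => fxM.
by apply: fxB; rewrite indicE; case: (x \in B); rewrite ?mule1 ?mule0.
Qed.

Lemma fundamental_vanishes_ess_bounded f (M : R) : fundamental_vanishes mu N ->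
  Mplus f -> (0 <= M)%R -> mu.-negligible [set x | M%:E < f x] ->
  forall e : R, (0 < e)%R -> exists2 delta : R, (0 < delta)%R &
    forall B, measurable B -> mu B < delta%:E ->
      N (fun x => f x * (\1_B x)%:E) <= e%:E.
Proof.
move=> small Mf M0 fM e e0.
have [delta delta0 Bsmall] := small (e / (M + 1))%R (divr_gt0 e0 (ltr_pwDr ltr01 M0)).
exists delta => // B mB Bdelta.
apply: le_trans (qBFN_ess_bounded_mul_indic Mf mB M0 fM) _.
apply: le_trans (lee_wpmul2l _ (Bsmall B mB Bdelta)) _; first by rewrite lee_fin.
by rewrite -EFinM lee_fin mulrA ler_pdivrMr; [nra|lra].
Qed.

Lemma L1Linf_sub_abs_cont (C : R) f (E : nat -> set T) : (0 < C)%R ->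
  (forall g, Mplus g -> N g <= C%:E * L1Linf mu g) -> fundamental_vanishes mu N ->
  Mplus f -> L1Linf mu f < +oo -> (forall k, measurable (E k)) ->
  {ae mu, forall x, (fun k => \1_(E k) x : R) @ \oo --> 0%R} ->
  (fun k => N (fun x => f x * (\1_(E k) x)%:E)) @ \oo --> 0.
Proof.
move=> C0 embed small Mf Lf mE E0.
have [N0 [_ [_ [[C1 [C1ge1 Nconcave]] [Nmono _]]]]] := NqB.
have [f0fin intfin] := L1Linf_lty Lf.
apply: nneg_cvge0 => [k|eta eta0]; first exact/N0/Mplus_mul_indic.
pose e := (eta / (2 * C1))%R.
have e0 : (0 < e)%R by rewrite divr_gt0 //; lra.
have [eps eps0 low_small] := L1Linf_low_part_small Mf Lf (divr_gt0 e0 C0).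
have N_low : N (low_part f eps) <= e%:E.
  apply: le_trans (embed _ (Mplus_low_part eps Mf)) _.
  apply: le_trans (lee_wpmul2l _ low_small) _; first by rewrite lee_fin ltW.
  by rewrite -EFinM mulrC divfK ?gt_eqF.
set F := [set x | eps%:E < f x].
have mF : measurable F by exact/measurable_level_set/Mf.1.
have [M [M0 fM]] := rearr0_ess_bound Mf f0fin.
have [delta delta0 high_small] := fundamental_vanishes_ess_bounded small Mf M0 fM e0.
have EF0 := measure_setI_cvg0 mE mF (measure_level_set_lty Mf eps0 intfin) E0.
near=> k.
have EkF_small : mu (E k `&` F) < delta%:E by near: k; exact: cvge0_lt.
have MfEF := Mplus_mul_indic Mf (measurableI _ _ (mE k) mF).
have Mlow := Mplus_low_part eps Mf.
apply: le_trans (_ : _ <= N ((fun x => f x * (\1_(E k `&` F) x)%:E) \+ low_part f eps)) _.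
  apply: Nmono; [exact: Mplus_mul_indic|exact: Mplus_add|].
  by apply: aeW; exact: mul_indic_le_high_low.
apply: le_trans (Nconcave _ _ MfEF Mlow) _.
have N_high := high_small _ (measurableI _ _ (mE k) mF) EkF_small.
apply: le_trans (lee_wpmul2l _ (leeD N_high N_low)) _; first by rewrite lee_fin; lra.
rewrite -EFinD -EFinM lee_fin (_ : C1 * (e + e) = eta)%R //.
by rewrite /e; field; lra.
Unshelve. all: by end_near.
Qed.

End absolute_continuity.

Section atomic.
Context {R : realType} {d} {T : measurableType d} (mu : {measure set T -> \bar R}).

Lemma atom_setI_null (A B : set T) : atom mu A -> measurable B -> mu B < mu A ->
  mu (A `&` B) = 0.
Proof.
move=> [mA [_ A_atom]] mB BA; have mAB := measurableI _ _ mA mB.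
have [//|AB_full] := A_atom _ mAB (@subIsetl _ _ _).
have : mu A = mu (A `\` (A `&` B)) + mu (A `&` (A `&` B)) by exact: measureDI.
rewrite AB_full add0e setIA setIid => AE.
have : mu (A `&` B) <= mu B by apply: le_measure; rewrite ?inE // => x [].
by rewrite -AE => /(lt_le_trans BA); rewrite ltxx.
Qed.

Lemma atomic_enum_small_null (beta : R) (e : nat -> set T) (B : set T) :
  atomic_enum mu beta e -> measurable B -> mu B < beta%:E -> mu B = 0.
Proof.
move=> [_ [e_atom [_ U_conull]]] mB B_small.
pose U := \bigcup_(n in [set n | Nidx mu beta n]) e n.
have mU : measurable U.
  by apply: bigcup_measurable => n /= n_idx; exact: (e_atom n n_idx).1.1.
pose G k := if Nidx mu beta k then e k `&` B else set0.
have G_null k : mu.-negligible (G k).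
  rewrite /G; case: ifPn => k_idx; last exact: negligible_set0.
  have [ek_atom ek_beta] := e_atom k k_idx.
  apply/negligibleP; first exact: measurableI ek_atom.1 mB.
  by apply: atom_setI_null; rewrite ?ek_beta.
have : mu.-negligible B.
  apply: (@negligibleS _ _ _ _ ((~` U) `|` \bigcup_k G k)).
    move=> x Bx; have [[n n_idx enx]|] := pselect (U x); last by left.
    by right; exists n => //; rewrite /G; move: n_idx => /= ->.
  apply: negligibleU; last exact: negligible_bigcup.
  by apply/negligibleP => //; exact: measurableC.
by move/negligibleP => /(_ mB).
Qed.

Lemma atomic_fundamental_vanishes (N : (T -> \bar R) -> \bar R) (beta : R) e :
  qBFN mu N -> atomic_enum mu beta e -> fundamental_vanishes mu N.
Proof.
move=> [_ [_ [Nnull _]]] e_enum eta eta0; exists beta; first by case: e_enum.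
move=> B mB B_small; rewrite (Nnull _ (Mplus_indic mB)).2 ?lee_fin ?ltW //.
exists B; split => //; first exact: atomic_enum_small_null e_enum mB B_small.
by move=> x /=; apply: contra_notP => nBx; rewrite indicE memNset.
Qed.

End atomic.

Lemma rearrL_ge_near0 {R : realType} (f0 : R -> \bar R) :
  measurable_fun Rplus f0 -> rearrL f0 0 = +oo ->
  forall K : R, (0 <= K)%R -> exists2 delta : R, (0 < delta)%R &
    forall t : R, (0 <= t)%R -> (t < delta)%R -> K%:E <= rearrL f0 t.
Proof.
(* Otherwise f0_*(K) <= t for arbitrarily small t > 0, whence f0^*(0) <= K. *)
move=> mf0 f0_inf K K0; apply: contrapT => no_delta.
suff : rearrL f0 0 <= K%:E by rewrite f0_inf leye_eq.
apply: rearr_le => //; apply/lee_addgt0Pr => e e0; rewrite add0e.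
have /existsNP [t /not_implyP [t0 /not_implyP [te /negP]]] :
    ~ forall t : R, (0 <= t)%R -> (t < e)%R -> K%:E <= rearrL f0 t.
  by move=> f0_ge; apply: no_delta; exists e.
rewrite -ltNge => /rearr_ltP [s [s0 ds]]; rewrite lte_fin => sK.
apply: le_trans (distf_le_antitone (@lebesgue_measure R) measurable_Rplus mf0 (ltW sK)) _.
by apply: le_trans ds _; rewrite lee_fin ltW.
Qed.

Section nonatomic.
Context {R : realType} {d} {T : measurableType d} (mu : {measure set T -> \bar R}).
Variable N : (T -> \bar R) -> \bar R.

Lemma ri_indic_eq (A B : set T) : ri mu N -> measurable A -> measurable B ->
  mu A = mu B -> N (fun x => (\1_A x)%:E) = N (fun x => (\1_B x)%:E).
Proof.
move=> Nri mA mB AB; apply: Nri; try exact: Mplus_indic.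
have distf_AB : distf mu setT (fun x => (\1_A x)%:E) = distf mu setT (fun x => (\1_B x)%:E).
  by apply/funext => s; rewrite !distf_indic AB.
by move=> t _; rewrite /rearr distf_AB.
Qed.

Variable sigma : T -> R.
Hypothesis sigma_pres : meas_pres mu sigma.

Lemma meas_pres_preimage_itv (a : R) : (0 <= a)%R -> a%:E <= mu setT ->
  measurable (sigma @^-1` `[0%R, a[) /\ mu (sigma @^-1` `[0%R, a[) = a%:E.
Proof.
case: sigma_pres => msigma [_ sigma_lebesgue] a0 a_le.
have itv_sub : `[0%R, a[%classic `<=` Imu mu.
  move=> t /=; rewrite in_itv /= => /andP [t0 ta]; split => //.
  by apply: lt_le_trans a_le; rewrite lte_fin.
split; first by have := msigma measurableT _ (measurable_itv `[0%R, a[); rewrite setTI.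
rewrite sigma_lebesgue // lebesgue_measure_itv /= lte_fin.
case: ltP => [_|a_le0]; first by rewrite oppr0 adde0.
by have -> : a = 0%R by apply: le_anti; rewrite a_le0 a0.
Qed.

Lemma Xbar_nonatomicE (f0 : R -> \bar R) :
  Xbar_nonatomic mu N sigma f0 = N (fun x => rearrL f0 (sigma x)).
Proof.
case: sigma_pres => _ [sigma_Imu _]; rewrite /Xbar_nonatomic; congr N.
by apply/funext => x; rewrite /cutrearr indicE (mem_set (sigma_Imu x)) mule1.
Qed.

Lemma Mplus_rearrL_comp (f0 : R -> \bar R) : Mplus (fun x => rearrL f0 (sigma x)).
Proof.
split; last by move=> x; exact: rearr_ge0.
by apply: measurableT_comp sigma_pres.1; exact: measurable_rearr.
Qed.

Lemma meas_pres_fundamental_vanishes (f0 : R -> \bar R) :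
  qBFN mu N -> ri mu N -> measurable_fun Rplus f0 ->
  Xbar_nonatomic mu N sigma f0 < +oo -> rearrL f0 0 = +oo -> fundamental_vanishes mu N.
Proof.
move=> [N0 [Nscale [_ [_ [Nmono _]]]]] Nri mf0 f0_fin f0_inf eta eta0.
rewrite Xbar_nonatomicE in f0_fin; set g := fun x => _ in f0_fin.
have Mg : Mplus g := Mplus_rearrL_comp f0.
set Ng := fine (N g).
have NgE : N g = Ng%:E by rewrite fineK // ge0_fin_numE // N0.
have Ng0 : (0 <= Ng)%R by rewrite -lee_fin -NgE N0.
pose K := ((Ng + 1) / eta)%R.
have K0 : (0 < K)%R by rewrite divr_gt0 //; lra.
have [delta delta0 f0_ge] := rearrL_ge_near0 mf0 f0_inf (ltW K0).
exists delta => // B mB B_small.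
have muB_fin : mu B \is a fin_num by rewrite ge0_fin_numE // (lt_trans B_small) ?ltry.
set a := fine (mu B); have muBa : mu B = a%:E by rewrite fineK.
have a0 : (0 <= a)%R by rewrite -lee_fin -muBa.
have a_delta : (a < delta)%R by rewrite -lte_fin -muBa.
have [|mA muA] := meas_pres_preimage_itv a0.
  by rewrite -muBa; apply: le_measure; rewrite ?inE.
set A := sigma @^-1` _ in mA muA.
rewrite (ri_indic_eq Nri mB mA (etrans muBa (esym muA))).
have KA : K%:E * N (fun x => (\1_A x)%:E) <= N g.
  rewrite -Nscale; [|exact: Mplus_indic|exact: ltW].
  apply: Nmono => //; first exact/Mplus_mul_indic/mA/Mplus_cst/ltW.
  apply: aeW => x; rewrite indicE; case: (boolP (x \in A)) => [/set_mem|_].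
    rewrite /A /= in_itv /= mule1 => /andP [sx0 sxa].
    by apply: f0_ge => //; exact: lt_trans sxa a_delta.
  by rewrite mule0; exact: rearr_ge0.
apply: le_trans (_ : _ <= (K^-1 * Ng)%:E) _; first by rewrite EFinM lee_pdivlMl // -NgE.
by rewrite lee_fin /K invf_div mulrAC ler_pdivrMr; [nra|lra].
Qed.

End nonatomic.

(* In the atomic case [f0] is not needed: sets of measure less than [beta] are null. *)
Lemma resonant_fundamental_vanishes {R : realType} {d} {T : measurableType d}
    (mu : {measure set T -> \bar R}) (N : (T -> \bar R) -> \bar R)
    (Nbar : (R -> \bar R) -> \bar R) :
  qBFN mu N -> ri mu N ->
  ((nonatomic mu /\
      exists sigma : T -> R, meas_pres mu sigma /\ Nbar = Xbar_nonatomic mu N sigma) \/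
   (exists (beta : R) (e : nat -> set T),
      atomic_enum mu beta e /\ Nbar = Xbar_atomic mu N beta e)) ->
  (exists f0 : R -> \bar R,
      measurable_fun Rplus f0 /\ Nbar f0 < +oo /\ rearrL f0 0 = +oo) ->
  fundamental_vanishes mu N.
Proof.
move=> NqB Nri [[_ [sigma [sigma_pres ->]]]|[beta [e [e_enum _]]]].
  move=> [f0 [mf0 [f0_fin f0_inf]]].
  exact (meas_pres_fundamental_vanishes sigma_pres NqB Nri mf0 f0_fin f0_inf).
by move=> _; exact (atomic_fundamental_vanishes NqB e_enum).
Qed.

Theorem mainTheorem10 (R : realType) (d : measure_display) (T : measurableType d)
  (mu : {measure set T -> \bar R})
  (N : (T -> \bar R) -> \bar R) (Nbar : (R -> \bar R) -> \bar R) :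
  sigma_finite setT mu ->
  qBFN mu N -> ri mu N ->
  (* resonant, and Nbar is the norm constructed in the context *)
  ((nonatomic mu /\
      exists sigma : T -> R, meas_pres mu sigma /\ Nbar = Xbar_nonatomic mu N sigma) \/
   (exists (beta : R) (e : nat -> set T),
      atomic_enum mu beta e /\ Nbar = Xbar_atomic mu N beta e)) ->
  (* L^1 cap L^infty embeds continuously into X *)
  (exists C : R, (0 < C)%R /\ forall f, Mplus f -> N f <= C%:E * L1Linf mu f) ->
  (* some f0 in Xbar with f0^*(0) = oo *)
  (exists f0 : R -> \bar R,
      measurable_fun Rplus f0 /\ Nbar f0 < +oo /\ rearrL f0 0 = +oo) ->
  (* L^1 cap L^infty is contained in X_a *)
  forall f : T -> \bar R, Mplus f -> L1Linf mu f < +oo ->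
    N f < +oo /\
    forall E : nat -> set T, (forall k, measurable (E k)) ->
      {ae mu, forall x, (fun k => \1_(E k) x : R) @ \oo --> 0%R} ->
      (fun k => N (fun x => f x * (\1_(E k) x)%:E)) @ \oo --> 0.
Proof.
move=> _ NqB Nri resonant [C [C0 embed]] f0_ex f Mf Lf.
have small := resonant_fundamental_vanishes NqB Nri resonant f0_ex.
split=> [|E mE E0]; last exact (L1Linf_sub_abs_cont NqB C0 embed small Mf Lf mE E0).
apply: le_lt_trans (embed f Mf) _.
by apply: lte_mul_pinfty => //; rewrite lee_fin ltW.
Qed.
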